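(* Let $k,l,m$ be positive integers. Suppose $A(x)=\sum_{i=0}^{k-1}a_ix^i$ is a monic polynomial of degree $k-1$, $B$ is a polynomial, and $c\in\mathbb C$, $c\ne0$, are such that $$(x-1)^l A(x)^m-x^kB(x)=c.$$ Then $A$ satisfies the differential equation $$m\,A'(x)\,(x-1)+l\,A(x)=\big(m(k-1)+l\big)\,x^{k-1};$$ consequently its coefficients are given by $a_{k-1}=1$ and $a_i=\dfrac{m(i+1)}{mi+l}\,a_{i+1}$ for $0\le i\le k-2$. Moreover $c=(-1)^l a_0^m$.
   Context: This is the normalization of the Shabat polynomial/Davenport–Zannier pair $P=(x-1)^lA^m$, $Q=x^kB$ for an ordinary tree of diameter 4 (series $F$). *)

From mathcomp Require Import all_boot all_order all_algebra all_field.

(** Write P = (X - 1)^l A^m = X^k B + c. Differentiating,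
    P' = (X - 1)^(l-1) A^(m-1) (m A' (X - 1) + l A) is divisible by X^(k-1).
    Since c = P(0) = (-1)^l A(0)^m is nonzero, X is coprime to X - 1 and to A,
    so X^(k-1) divides m A' (X - 1) + l A, a polynomial of degree at most k - 1.
    Hence it is a multiple of X^(k-1); comparing coefficients gives both the
    value of that multiple and the recursion for the coefficients of A. *)

From mathcomp Require Import all_boot all_order all_algebra all_field.
From mathcomp Require Import ring zify.
Set Implicit Arguments.
Unset Strict Implicit.
Unset Printing Implicit Defensive.

Import GRing.Theory Num.Theory.
Local Open Scope ring_scope.

Section DifferentialOperator.

Variable R : comNzRingType.
Implicit Types (p q A B : {poly R}) (c : R).

Definition dz_op (m l : nat) A : {poly R} :=
  m%:R *: (A^`() * ('X - 1)) + l%:R *: A.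

Lemma coef_dz_op m l A i :
  (dz_op m l A)`_i = (l%:R + m%:R * i%:R) * A`_i - m%:R * i.+1%:R * A`_i.+1.
Proof.
rewrite coefD !coefZ mulrBr mulr1 coefB coefMX !coef_deriv.
by case: i => [|i]; rewrite -!(mulr_natr (A`_ _)) /=; ring.
Qed.

Lemma size_dz_op m l A : (size (dz_op m l A) <= size A)%N.
Proof.
apply/leq_sizeP => i le_A_i.
by rewrite coef_dz_op !nth_default ?mulr0 ?subr0 //; apply: leq_trans le_A_i _.
Qed.

Lemma deriv_exp_mul_exp p q l m :
  (p ^+ l.+1 * q ^+ m.+1)^`() =
  p ^+ l * q ^+ m * (m.+1%:R *: (q^`() * p) + l.+1%:R *: (p^`() * q)).
Proof. by rewrite derivM !deriv_exp !scaler_nat !exprS; ring. Qed.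

Lemma deriv_Xn_mul_addC n B c :
  ('X ^+ n.+1 * B + c%:P)^`() = 'X ^+ n * (B *+ n.+1 + 'X * B^`()).
Proof. by rewrite derivD derivC addr0 derivM derivXn exprS; ring. Qed.

Lemma horner0_XsubC1_exp_mul_exp l m A :
  (('X - 1) ^+ l * A ^+ m).[0] = (-1) ^+ l * A`_0 ^+ m.
Proof. by rewrite -horner_coef0 hornerM !horner_exp !hornerE. Qed.

Lemma dz_const_eq k l m A B c : (0 < k)%N ->
  ('X - 1) ^+ l * A ^+ m - 'X ^+ k * B = c%:P -> c = (-1) ^+ l * A`_0 ^+ m.
Proof.
move=> k_gt0 /(congr1 (horner^~ 0)).
rewrite hornerD hornerN horner0_XsubC1_exp_mul_exp hornerM hornerXn expr0n.
by rewrite eqn0Ngt k_gt0 mul0r subr0 hornerC => ->.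
Qed.

End DifferentialOperator.

Section FieldCoefficients.

Variable F : fieldType.
Implicit Types (p A B : {poly F}) (c : F).

Lemma dvdp_Xn_size_eq n p :
  'X ^+ n %| p -> (size p <= n.+1)%N -> p = p`_n *: 'X ^+ n.
Proof.
case/dvdpP=> r ->; have [->|r_nz] := eqVneq r 0; first by rewrite mul0r coef0 scale0r.
rewrite size_mulXn // -addn1 leq_add2l => /size1_polyC ->.
by rewrite coefMXn ltnn subnn coefC eqxx mul_polyC.
Qed.

Lemma coprimep_XsubC1_exp_mul_exp_X l m A :
  A`_0 != 0 -> coprimep (('X - 1) ^+ l * A ^+ m) 'X.
Proof.
move=> A0_nz; rewrite coprimepX rootE horner0_XsubC1_exp_mul_exp.
by rewrite mulf_neq0 ?expf_neq0 // oppr_eq0 oner_eq0.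
Qed.

Lemma Xn_dvdp_dz_op k l m A B c : (0 < k)%N -> (0 < l)%N -> (0 < m)%N ->
  A`_0 != 0 -> ('X - 1) ^+ l * A ^+ m - 'X ^+ k * B = c%:P ->
  'X ^+ k.-1 %| dz_op m l A.
Proof.
case: k l m => [|k] [|l] [|m] // _ _ _ A0_nz E.
have dvd_deriv : 'X ^+ k %| (('X - 1) ^+ l.+1 * A ^+ m.+1)^`().
  have -> : ('X - 1) ^+ l.+1 * A ^+ m.+1 = 'X ^+ k.+1 * B + c%:P.
    by rewrite -E [RHS]addrC subrK.
  by rewrite deriv_Xn_mul_addC dvdp_mulr.
move: dvd_deriv; rewrite deriv_exp_mul_exp derivXsubC mul1r Gauss_dvdpr //.
by apply: coprimep_expl; rewrite coprimep_sym coprimep_XsubC1_exp_mul_exp_X.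
Qed.

Lemma dz_op_coef_eq0 m l A i : (m * i + l)%:R != 0 :> F ->
  (dz_op m l A)`_i = 0 ->
  A`_i = (m * (i + 1))%:R / (m * i + l)%:R * A`_(i + 1).
Proof.
move=> nz; rewrite coef_dz_op => /eqP; rewrite subr_eq0 => /eqP h.
rewrite natrM addn1 mulrAC -h.
rewrite natrD natrM in nz.
by field.
Qed.

End FieldCoefficients.

Theorem mainTheorem7 (k l m : nat) (A B : {poly algC}) (c : algC) :
  (0 < k)%N -> (0 < l)%N -> (0 < m)%N ->
  A \is monic -> size A = k ->
  c != 0 ->
  ('X - 1) ^+ l * A ^+ m - 'X ^+ k * B = c%:P ->
  [/\ m%:R *: (A^`() * ('X - 1)) + l%:R *: A
        = (m * (k - 1) + l)%:R *: 'X ^+ (k - 1),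
      A`_(k - 1) = 1,
      (forall i : nat, (i + 2 <= k)%N ->
         A`_i = (m * (i + 1))%:R / (m * i + l)%:R * A`_(i + 1))
    & c = (-1) ^+ l * (A`_0) ^+ m].
Proof.
move=> k_gt0 l_gt0 m_gt0 monA szA c_nz E.
have Ec := dz_const_eq k_gt0 E.
have A0_nz : A`_0 != 0.
  by apply: contraNneq c_nz => A0; rewrite Ec A0 expr0n eqn0Ngt m_gt0 mulr0.
rewrite subn1.
have leadA : A`_k.-1 = 1 by rewrite -szA; apply/monicP.
have Q_eq : dz_op m l A = (dz_op m l A)`_k.-1 *: 'X ^+ k.-1.
  apply: dvdp_Xn_size_eq; first exact: Xn_dvdp_dz_op E.
  by rewrite prednK // -szA size_dz_op.
have Qk : (dz_op m l A)`_k.-1 = (m * k.-1 + l)%:R.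
  rewrite coef_dz_op leadA prednK // nth_default ?szA // mulr0 subr0 mulr1.
  by rewrite natrD natrM addrC.
split=> // [|i lt_i_k]; first by rewrite -[LHS]/(dz_op m l A) Q_eq Qk.
apply: dz_op_coef_eq0; first by rewrite pnatr_eq0; lia.
by rewrite Q_eq coefZ coefXn ltn_eqF ?mulr0 //; lia.
Qed.
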